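(* Let $m$ be a positive integer and $\mathcal{N}_r$ the gadget of size $m$. Every $\mathcal{H}^{(\ast)}$-partition of $\mathcal{N}_r$ has size at least $m+1$. Moreover, there exist exactly two $\mathcal{H}^{(m+1)}$-partitions of $\mathcal{N}_r$, namely $\mathcal{L}_r=\{\{r_{i,0},r_{i,1},\dots,r_{i,m}\}:0\le i\le m\}$ and $\mathcal{R}_r=\{\{r_{0,i},r_{1,i},\dots,r_{m,i}\}:0\le i\le m\}$.
   Context: The gadget $\mathcal{N}_r=\langle\mathcal{V}_r,\mathcal{E}_r\rangle$ of size $m$ has vertex set $\mathcal{V}_r=\{r_{i,j}:0\le i,j\le m\}$ and arc set $\mathcal{E}_r=\{\langle r_{i,j},r_{i,j+1}\rangle:0\le i\le m,\ 0\le j<m\}\cup\{\langle r_{i,j},r_{i+1,j}\rangle:0\le i<m,\ 0\le j\le m\}$; it is a DAG. For a DAG $G$, a partition $\pi$ of its vertex set is an $\mathcal{H}^{(k)}$-partition if $|\pi|=k$, every induced subgraph $G[P]$, $P\in\pi$, has a directed Hamiltonian path, and the quotient digraph $G/\pi$ (vertex set $\pi$, arc $\langle P,Q\rangle$ for $P\ne Q$ whenever some arc of $G$ goes from $P$ to $Q$) is acyclic; an $\mathcal{H}^{(\ast)}$-partition is an $\mathcal{H}^{(k)}$-partition for some $k$. *)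

From mathcomp Require Import all_boot.
Set Implicit Arguments. Unset Strict Implicit. Unset Printing Implicit Defensive.

Section Generic.
Variable V : finType.
Variable arc : rel V.

Definition has_ham_path (A : {set V}) : Prop :=
  exists s : seq V, [/\ uniq s, (forall x, (x \in s) = (x \in A)) & sorted arc s].

Definition quot_arc (pi : {set {set V}}) : rel {set V} :=
  fun P Q => [&& P \in pi, Q \in pi, P != Q &
                 [exists x in P, exists y in Q, arc x y]].

Definition acyclic_rel (T : finType) (e : rel T) : Prop :=
  forall a b, e a b -> ~~ connect e b a.

Definition Hk_partition (k : nat) (pi : {set {set V}}) : Prop :=
  [/\ partition pi [set: V], #|pi| = k,
      (forall P, P \in pi -> has_ham_path P) &
      acyclic_rel (quot_arc pi)].

Definition Hstar_partition (pi : {set {set V}}) : Prop :=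
  exists k, Hk_partition k pi.
End Generic.

(* The gadget N_r of size m: vertex r_{i,j} is the pair (i,j), 0 <= i,j <= m. *)
Definition gvert (m : nat) := ('I_m.+1 * 'I_m.+1)%type.

Definition garc (m : nat) : rel (gvert m) :=
  fun u v => ((u.1 == v.1) && (v.2 == u.2.+1 :> nat))
          || ((u.2 == v.2) && (v.1 == u.1.+1 :> nat)).

Definition Lpart (m : nat) : {set {set gvert m}} :=
  [set [set ((i, j) : gvert m) | j : 'I_m.+1] | i : 'I_m.+1].
Definition Rpart (m : nat) : {set {set gvert m}} :=
  [set [set ((j, i) : gvert m) | j : 'I_m.+1] | i : 'I_m.+1].

(* Every arc raises i + j by one, so a block of an H-partition, being traced by
   a directed path, meets each antidiagonal at most once.  If that path turned
   at b, the opposite corner d of the unit square would lie on b's antidiagonal,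
   hence outside the block, and the two arcs through d would form a 2-cycle in
   the quotient.  So every block lies in a row or a column and has at most m+1
   vertices; counting the (m+1)^2 vertices gives at least m+1 blocks, with
   equality only when every block is a full row or column.  A row and a column
   always meet, so all blocks then have the same orientation. *)
From mathcomp Require Import all_boot zify.
Set Implicit Arguments. Unset Strict Implicit. Unset Printing Implicit Defensive.

Lemma sorted_homo_inj (T : eqType) (r : rel T) (g : T -> nat) (s : seq T) :
  (forall x y, r x y -> g x < g y) -> sorted r s -> {in s &, injective g}.
Proof.
move=> gr; elim: s => // x s IH /= xs.
have gx : all (fun y => g x < g y) s.
  apply: (order_path_min (leT := relpre g ltn)); first by move=> y z w; apply: ltn_trans.
  exact: sub_path xs.
move=> a c; rewrite !inE => /predU1P[->|aS] /predU1P[->|cS] //.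
- by move=> gxc; have := allP gx c cS; rewrite gxc ltnn.
- by move=> gax; have := allP gx a aS; rewrite gax ltnn.
- exact: IH (path_sorted xs) a c aS cS.
Qed.

Lemma acyclic_homo (T : finType) (r : rel T) (g : T -> nat) :
  (forall x y, r x y -> g x < g y) -> acyclic_rel r.
Proof.
move=> gr a b /gr gab; apply/negP => /connectP[p bp aE]; rewrite {a}aE in gab.
have : all (fun y => g b <= g y) p.
  apply: (order_path_min (leT := relpre g leq)); first by move=> y z w; apply: leq_trans.
  by apply: sub_path bp => x y /gr /ltnW.
move: (mem_last b p) gab; rewrite inE => /predU1P[->|lp]; first by rewrite ltnn.
by move=> glb /allP/(_ _ lp); rewrite leqNgt glb.
Qed.

Lemma acyclic_quot_mid (V : finType) (arc : rel V) (pi : {set {set V}}) P a c d :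
  partition pi [set: V] -> acyclic_rel (quot_arc arc pi) -> P \in pi ->
  a \in P -> c \in P -> arc a d -> arc d c -> d \in P.
Proof.
move=> /and3P[/eqP cov _ _] acyc Ppi aP cP ad dc.
have dcov : d \in cover pi by rewrite cov inE.
have Qpi := pblock_mem dcov; have dQ := mem_pblock pi d; rewrite dcov in dQ.
have [->//|PQ] := eqVneq P (pblock pi d).
have PQa : quot_arc arc pi P (pblock pi d).
  rewrite /quot_arc Ppi Qpi PQ; apply/exists_inP; exists a => //.
  by apply/exists_inP; exists d.
have QPa : quot_arc arc pi (pblock pi d) P.
  rewrite /quot_arc Ppi Qpi eq_sym PQ; apply/exists_inP; exists d => //.
  by apply/exists_inP; exists c.
by have := acyc _ _ PQa; rewrite connect1.
Qed.

Lemma partition_card_leqif (T : finType) (pi : {set {set T}}) (D : {set T}) k :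
  partition pi D -> {in pi, forall A : {set T}, #|A| <= k} ->
  #|D| <= #|pi| * k ?= iff [forall (A | A \in pi), #|A| == k].
Proof.
move=> piD le_k; rewrite (card_partition piD) -sum_nat_const.
by apply: leqif_sum => A /le_k; apply: leqif_eq.
Qed.

Section Grid.
Variable m : nat.
Notation V := (gvert m).
Notation arc := (@garc m).

Definition coord (b : bool) (z : V) : 'I_m.+1 := if b then z.1 else z.2.
Definition mk (b : bool) (i j : 'I_m.+1) : V := if b then (i, j) else (j, i).
Definition line (b : bool) (i : 'I_m.+1) : {set V} := [set mk b i j | j : 'I_m.+1].
Definition lines (b : bool) : {set {set V}} := [set line b i | i : 'I_m.+1].
Definition antidiag (z : V) : nat := z.1 + z.2.
Definition aligned (b : bool) : rel V := [rel u v | coord b u == coord b v].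
Definition orient (x y : V) : bool := x.1 == y.1.

Lemma Lpart_lines : Lpart m = lines true. Proof. by []. Qed.
Lemma Rpart_lines : Rpart m = lines false. Proof. by []. Qed.

Lemma garcP (x y : V) :
  reflect ((x.1 = y.1 :> nat /\ y.2 = x.2.+1 :> nat) \/
           (x.2 = y.2 :> nat /\ y.1 = x.1.+1 :> nat))
          (arc x y).
Proof.
rewrite /garc -!val_eqE; apply: (iffP orP).
  by case=> /andP[/eqP h1 /eqP h2]; [left|right].
by case=> -[/eqP h1 /eqP h2]; [left|right]; apply/andP.
Qed.

Lemma coord_mk b i j : coord b (mk b i j) = i. Proof. by case: b. Qed.
Lemma coordN_mk b i j : coord (~~ b) (mk b i j) = j. Proof. by case: b. Qed.

Lemma mem_line b i z : (z \in line b i) = (coord b z == i).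
Proof.
apply/imsetP/eqP => [[j _ ->]|<-]; first exact: coord_mk.
by exists (coord (~~ b) z) => //; case: b; case: z.
Qed.

Lemma mk_inj b i : injective (mk b i).
Proof. by case: b => j k [->]. Qed.

Lemma card_line b i : #|line b i| = m.+1.
Proof. by rewrite card_imset ?card_ord //; apply: mk_inj. Qed.

Lemma mk_line b i j : mk b i j \in line b i.
Proof. by rewrite mem_line coord_mk. Qed.

Lemma mk_lineN b i j : mk b i j \in line (~~ b) j.
Proof. by rewrite mem_line coordN_mk. Qed.

Lemma coord_arc b x y : arc x y -> coord b x <= coord b y.
Proof. by case: b => /garcP /=; lia. Qed.

Lemma antidiag_arc x y : arc x y -> antidiag x < antidiag y.
Proof. by rewrite /antidiag => /garcP; lia. Qed.

Lemma arc_aligned x y : arc x y -> aligned (orient x y) x y.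
Proof.
rewrite /aligned /orient /=; case: (x.1 =P y.1) => [e _|ne /garcP [[h _]|[h _]]] /=.
- by rewrite e.
- by case: ne; apply: val_inj.
- exact/eqP/val_inj.
Qed.

(* The other corner of the unit square spanned by a turning path a -> b -> c. *)
Lemma turn_corner a b c : arc a b -> arc b c -> orient a b != orient b c ->
  exists d, [/\ arc a d, arc d c, d != b & antidiag d = antidiag b].
Proof.
rewrite /orient /antidiag -!val_eqE => /garcP ab /garcP bc.
case: (a.1 =P b.1 :> nat) => e1; case: (b.1 =P c.1 :> nat) => e2 //= _.
- exists (c.1, a.2); split=> /=; try apply/garcP => /=; try lia.
  by apply/eqP => /(congr1 (fun z : V => val z.2)) /=; lia.
- exists (a.1, c.2); split=> /=; try apply/garcP => /=; try lia.
  by apply/eqP => /(congr1 (fun z : V => val z.1)) /=; lia.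
Qed.

Lemma aligned_trans b : transitive (aligned b).
Proof. by move=> v u w; rewrite /aligned /= => /eqP -> /eqP ->. Qed.

Lemma card_gvert : #|[set: V]| = m.+1 * m.+1.
Proof. by rewrite cardsT card_prod card_ord. Qed.

Section Blocks.
Variable pi : {set {set V}}.
Hypothesis pi_part : partition pi [set: V].
Hypothesis pi_ham : forall P, P \in pi -> has_ham_path arc P.
Hypothesis pi_acyclic : acyclic_rel (quot_arc arc pi).

Lemma antidiag_inj_block P : P \in pi -> {in P &, injective antidiag}.
Proof.
move=> /pi_ham [s [_ sP ss]] x y; rewrite -!sP.
exact: sorted_homo_inj antidiag_arc ss x y.
Qed.

Lemma block_no_turn P a b c : P \in pi -> a \in P -> b \in P -> c \in P ->
  arc a b -> arc b c -> orient a b = orient b c.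
Proof.
move=> Ppi aP bP cP ab bc; case: (eqVneq (orient a b) (orient b c)) => // turn.
have [d [ad dc db dsum]] := turn_corner ab bc turn.
have dP := acyclic_quot_mid pi_part pi_acyclic Ppi aP cP ad dc.
by move: db; rewrite (antidiag_inj_block Ppi dP bP dsum) eqxx.
Qed.

Lemma block_path_aligned P x y s : P \in pi -> {subset x :: y :: s <= P} ->
  path arc x (y :: s) -> path (aligned (orient x y)) x (y :: s).
Proof.
move=> Ppi; elim: s x y => [|z s IH] x y sub /=.
  by rewrite !andbT; apply: arc_aligned.
case/andP=> xy yzs; rewrite (arc_aligned xy) /=.
have sub' : {subset y :: z :: s <= P}.
  by move=> u u_in; apply: sub; rewrite inE u_in orbT.
case/andP: (yzs) => yz _.
rewrite (block_no_turn Ppi (sub x (mem_head _ _)) (sub' y (mem_head _ _)) _ xy yz).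
  exact: IH sub' yzs.
by apply: sub'; rewrite !inE eqxx orbT.
Qed.

Lemma block_sub_line P : P \in pi -> exists b i, P \subset line b i.
Proof.
move=> Ppi; have [s [_ sP ss]] := pi_ham Ppi.
case: s sP ss => [|x s] sP ss.
  have P0 : P = set0 by apply/setP => z; rewrite -sP inE.
  by case/and3P: pi_part => _ _; rewrite -P0 Ppi.
pose b := if s is y :: _ then orient x y else true.
have al : path (aligned b) x s.
  rewrite /b; case: s sP ss {b} => [//|y s] sP ss.
  by apply: block_path_aligned Ppi _ ss => z; rewrite sP.
exists b, (coord b x); apply/subsetP => z; rewrite -sP mem_line inE.
case/predU1P => [->//|zs].
by rewrite eq_sym; apply: (allP (order_path_min (@aligned_trans b) al)).
Qed.

Lemma card_block_le P : P \in pi -> #|P| <= m.+1.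
Proof.
by case/block_sub_line=> b [i /subset_leq_card]; rewrite card_line.
Qed.

Lemma card_blocks_leqif :
  m.+1 * m.+1 <= #|pi| * m.+1 ?= iff [forall (A | A \in pi), #|A| == m.+1].
Proof. by rewrite -card_gvert; apply: partition_card_leqif pi_part card_block_le. Qed.

Lemma card_blocks_ge : m.+1 <= #|pi|.
Proof. by rewrite -(leq_pmul2r (ltn0Sn m)) card_blocks_leqif. Qed.

Lemma block_eq_line P : #|pi| = m.+1 -> P \in pi -> exists b i, P = line b i.
Proof.
move=> pi_card Ppi; have [b [i Pline]] := block_sub_line Ppi.
have /forall_inP/(_ P Ppi)/eqP cardP : [forall (A | A \in pi), #|A| == m.+1].
  by rewrite -(card_blocks_leqif).2 pi_card.
by exists b, i; apply/eqP; rewrite eqEcard Pline card_line cardP leqnn.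
Qed.

End Blocks.

Lemma lines_partition b : partition (lines b) [set: V].
Proof.
apply/and3P; split.
- apply/eqP/setP => z; rewrite inE; apply/bigcupP.
  by exists (line b (coord b z)); rewrite ?imset_f // mem_line.
- apply/trivIsetP => _ _ /imsetP[i _ ->] /imsetP[j _ ->] ne.
  apply/pred0P => z /=; rewrite !mem_line.
  by apply: contraNF ne => /andP[/eqP <- /eqP <-].
- by apply/imsetP => -[i _ /setP/(_ (mk b i i))]; rewrite mk_line inE.
Qed.

Lemma card_lines b : #|lines b| = m.+1.
Proof.
rewrite card_imset ?card_ord // => i j /setP/(_ (mk b i i)).
by rewrite !mem_line coord_mk eqxx => /esym/eqP.
Qed.

Lemma iota_succ_sorted k n : sorted (fun a c => c == a.+1) (iota k n).
Proof. by elim: n k => [|[|n] IH] k //=; rewrite eqxx; apply: IH k.+1. Qed.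

Lemma line_ham_path b i : has_ham_path arc (line b i).
Proof.
exists [seq mk b i j | j <- enum 'I_m.+1]; split.
- by rewrite map_inj_uniq ?enum_uniq //; apply: mk_inj.
- by move=> z; apply/mapP/imsetP => -[j _ ->]; exists j; rewrite ?mem_enum.
- have : sorted (fun a c => c == a.+1) (map val (enum 'I_m.+1)).
    by rewrite val_enum_ord iota_succ_sorted.
  rewrite !sorted_map; apply: sub_sorted => j k /= /eqP kj.
  by case: b; apply/garcP; rewrite /= kj; lia.
Qed.

(* Blocks are ordered by their common coordinate, which never decreases along an arc. *)
Lemma lines_acyclic b : acyclic_rel (quot_arc arc (lines b)).
Proof.
pose idx (P : {set V}) := if [pick z in P] is Some z then nat_of_ord (coord b z) else 0.
have idx_line i : idx (line b i) = i.
  rewrite /idx; case: pickP => [z|/(_ (mk b i i))]; last by rewrite mk_line.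
  by rewrite mem_line => /eqP ->.
apply: (acyclic_homo (g := idx)) => P Q.
case/and4P=> /imsetP[i _ ->] /imsetP[j _ ->] ne /exists_inP[x xi /exists_inP[y yj xy]].
move: xi yj; rewrite !mem_line => /eqP ix /eqP jy; subst i j.
rewrite !idx_line ltn_neqAle coord_arc // andbT.
by apply: contraNneq ne => /val_inj ->.
Qed.

Lemma lines_Hk b : Hk_partition arc m.+1 (lines b).
Proof.
split; [exact: lines_partition | exact: card_lines | | exact: lines_acyclic].
by move=> _ /imsetP[i _ ->]; apply: line_ham_path.
Qed.

Section Nondegenerate.
Hypothesis m_gt0 : 0 < m.

Lemma line_neq b i j : line b i != line (~~ b) j.
Proof.
apply/eqP => e; have on_j k : k = j.
  by apply/eqP; rewrite -(coordN_mk b i k) -mem_line -e mk_line.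
by have := on_j ord_max; rewrite -(on_j ord0) => /(congr1 val) /=; lia.
Qed.

Lemma lines_neq b : lines b != lines (~~ b).
Proof.
apply/eqP => e; have /imsetP[j _ /eqP] : line b ord0 \in lines (~~ b) by rewrite -e imset_f.
by rewrite (negbTE (line_neq _ _ _)).
Qed.

(* A row block and a column block would share a vertex. *)
Lemma Hk_eq_lines pi : Hk_partition arc m.+1 pi -> exists b, pi = lines b.
Proof.
case=> pi_part pi_card pi_ham pi_acyc.
have full := block_eq_line pi_part pi_ham pi_acyc pi_card.
have [P0 P0pi] : exists P0, P0 \in pi by apply/set0Pn; rewrite -card_gt0 pi_card.
have [b [i0 P0E]] := full _ P0pi.
exists b; apply/eqP; rewrite eqEcard card_lines pi_card leqnn andbT.
apply/subsetP => P Ppi; have [b' [i PE]] := full _ Ppi.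
have [<-|nb] := eqVneq b' b; first by rewrite PE imset_f.
have {nb}b'E : b' = ~~ b by case: b b' nb {PE P0E} => [] [].
subst b'.
case/and3P: pi_part => _ /trivIsetP/(_ _ _ P0pi Ppi) triv _.
move: triv; rewrite P0E PE line_neq => /(_ isT)/disjointFr/(_ (mk_line b i0 i)).
by rewrite mk_lineN.
Qed.

End Nondegenerate.

End Grid.

Theorem lemma5p4 (m : nat) (hm : 0 < m) :
  (forall pi : {set {set gvert m}},
      Hstar_partition (@garc m) pi -> m.+1 <= #|pi|) /\
  (forall pi : {set {set gvert m}},
      Hk_partition (@garc m) m.+1 pi <-> (pi = Lpart m \/ pi = Rpart m)) /\
  Lpart m <> Rpart m.
Proof.
split; first by move=> pi [k [pi_part _ pi_ham pi_acyc]]; apply: card_blocks_ge pi_ham pi_acyc.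
split; last by apply/eqP; rewrite Lpart_lines Rpart_lines (lines_neq hm true).
move=> pi; rewrite Lpart_lines Rpart_lines; split.
  by case/(Hk_eq_lines hm) => -[] ->; [left | right].
by case=> ->; apply: lines_Hk.
Qed.
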